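(* Let $n=p_1^{\alpha_1}\cdots p_r^{\alpha_r}$ be the canonical factorization of $n$ into distinct primes and let $d=p_1^{\beta_1}\cdots p_r^{\beta_r}$ be a square-free divisor of $n$ ($0\le\beta_\ell\le1$ for all $\ell$). Then for every $z\in\mathbb{C}$, $$\sum_{k\mid n}\frac{1}{|c_d(k)|^z}=\prod_{\ell=1}^r\Big(1+\frac{\alpha_\ell}{(p_\ell-1)^{\beta_\ell z}}\Big).$$
   Context: For integers $m\ge1$ and $x$, $c_m(x)=\sum_{1\le j\le m,\ (j,m)=1}e^{2\pi ijx/m}$ is the Ramanujan sum (for square-free $d$ it is a nonzero integer at every divisor $k$ of $n$); for a positive real $a$, $a^z=e^{z\log a}$ with the real logarithm; the sum is over positive divisors $k$ of $n$. *)

From Stdlib Require Import Reals Arith List ZArith Znumtheory.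
From Coquelicot Require Import Coquelicot.
Import ListNotations.
Open Scope R_scope.

Definition cexpi (theta : R) : C := (cos theta, sin theta).

(* a^z = e^{z log a} for a positive real a (real logarithm), z complex:
   e^{(x+iy) L} = e^{xL} (cos (yL) + i sin (yL)). *)
Definition cpow (a : R) (z : C) : C :=
  let L := ln a in
  (exp (Re z * L) * cos (Im z * L), exp (Re z * L) * sin (Im z * L)).

Definition Csum (l : list C) : C := fold_right Cplus (RtoC 0) l.
Definition Cprod (l : list C) : C := fold_right Cmult (RtoC 1) l.

Definition ramanujan_sum (m : nat) (x : Z) : C :=
  Csum (map (fun j => cexpi (2 * PI * IZR (Z.of_nat j * x) / INR m))
            (filter (fun j => Nat.eqb (Nat.gcd j m) 1) (seq 1 m))).

Definition divisors_list (n : nat) : list nat :=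
  filter (fun k => Nat.eqb (n mod k) 0) (seq 1 n).

Definition nprod (l : list nat) : nat := fold_right Nat.mul 1%nat l.

From Stdlib Require Import Reals Arith List ZArith Znumtheory Lia Lra Permutation.
From Coquelicot Require Import Coquelicot.

(* Writing e(x) = exp(2 pi i x), the Ramanujan sum satisfies, for a prime q not dividing m,
     c_(qm)(k) = [q | k] q c_m(k/q) - c_m(k):
   the j <= qm prime to qm are the j prime to m minus the multiples of q among them; grouping
   the former as j = i + t m, the sum over t collapses by orthogonality of the characters of
   Z/qZ, while the latter are j = q i and give c_m(k).  Hence for square-free d, c_d(k) is the
   product over the primes p | d of p - 1 if p | k and -1 otherwise, so |c_d(k)|^(-z) is a
   product of local factors depending only on which p_l divide k.  The sum of such a product
   over the divisors of n = prod p_l^alpha_l factorizes: of the divisors 1, p, ..., p^alpha of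
   p^alpha, one contributes 1 and alpha contribute (p - 1)^(-beta z). *)

Open Scope R_scope.

Lemma Csum_app (l1 l2 : list C) : Csum (l1 ++ l2) = Cplus (Csum l1) (Csum l2).
Proof. induction l1 as [|a l IH]; simpl; [ring | rewrite IH; ring]. Qed.

Lemma Csum_ext {A} (f g : A -> C) (l : list A) :
  (forall x, In x l -> f x = g x) -> Csum (map f l) = Csum (map g l).
Proof. intros H. f_equal. apply map_ext_in. exact H. Qed.

Lemma Cprod_ext {A} (f g : A -> C) (l : list A) :
  (forall x, In x l -> f x = g x) -> Cprod (map f l) = Cprod (map g l).
Proof. intros H. f_equal. apply map_ext_in. exact H. Qed.

Lemma Csum_plus {A} (f g : A -> C) (l : list A) :
  Csum (map (fun x => Cplus (f x) (g x)) l) = Cplus (Csum (map f l)) (Csum (map g l)).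
Proof. induction l as [|a l IH]; simpl; [ring | rewrite IH; ring]. Qed.

Lemma Csum_minus {A} (f g : A -> C) (l : list A) :
  Csum (map (fun x => Cminus (f x) (g x)) l) = Cminus (Csum (map f l)) (Csum (map g l)).
Proof. induction l as [|a l IH]; simpl; [ring | rewrite IH; ring]. Qed.

Lemma Csum_scal {A} (c : C) (f : A -> C) (l : list A) :
  Csum (map (fun x => Cmult c (f x)) l) = Cmult c (Csum (map f l)).
Proof. induction l as [|a l IH]; simpl; [ring | rewrite IH; ring]. Qed.

Lemma Csum_scal_r {A} (c : C) (f : A -> C) (l : list A) :
  Csum (map (fun x => Cmult (f x) c) l) = Cmult (Csum (map f l)) c.
Proof. induction l as [|a l IH]; simpl; [ring | rewrite IH; ring]. Qed.

Lemma Csum_const {A} (c : C) (l : list A) :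
  Csum (map (fun _ => c) l) = Cmult (RtoC (INR (length l))) c.
Proof.
  induction l as [|a l IH]; simpl length.
  - simpl. ring.
  - simpl map. simpl Csum. rewrite IH, S_INR, RtoC_plus. ring.
Qed.

Lemma Csum_zero {A} (l : list A) : Csum (map (fun _ => RtoC 0) l) = RtoC 0.
Proof. rewrite Csum_const. ring. Qed.

Lemma Csum_filter {A} (P : A -> bool) (f : A -> C) (l : list A) :
  Csum (map f (filter P l)) = Csum (map (fun x => if P x then f x else RtoC 0) l).
Proof. induction l as [|a l IH]; simpl; [reflexivity | destruct (P a); simpl; rewrite IH; ring]. Qed.

Lemma Csum_perm {A} (f : A -> C) (l1 l2 : list A) :
  Permutation l1 l2 -> Csum (map f l1) = Csum (map f l2).
Proof. induction 1; simpl; congruence || ring. Qed.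

Lemma Csum_swap {A B} (F : A -> B -> C) (l1 : list A) (l2 : list B) :
  Csum (map (fun a => Csum (map (fun b => F a b) l2)) l1)
  = Csum (map (fun b => Csum (map (fun a => F a b) l1)) l2).
Proof.
  induction l1 as [|a l IH]; simpl.
  - symmetry. apply Csum_zero.
  - rewrite IH, <- Csum_plus. reflexivity.
Qed.

Lemma Csum_flat_map {A B} (f : B -> C) (g : A -> list B) (l : list A) :
  Csum (map f (flat_map g l)) = Csum (map (fun a => Csum (map f (g a))) l).
Proof. induction l as [|a l IH]; simpl; [reflexivity | rewrite map_app, Csum_app, IH; reflexivity]. Qed.

Lemma Csum_telescope (f : nat -> C) (q : nat) :
  Csum (map (fun t => Cminus (f t) (f (S t))) (seq 0 q)) = Cminus (f 0%nat) (f q).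
Proof.
  induction q as [|q IH]; [simpl; ring|].
  rewrite seq_S, map_app, Csum_app, IH. simpl. ring.
Qed.

Definition cis2pi (x : R) : C := cexpi (2 * PI * x).

Lemma cis2pi_add (x y : R) : cis2pi (x + y) = Cmult (cis2pi x) (cis2pi y).
Proof.
  unfold cis2pi, cexpi, Cmult. simpl.
  replace (2 * PI * (x + y)) with (2 * PI * x + 2 * PI * y) by ring.
  rewrite cos_plus, sin_plus. f_equal; ring.
Qed.

Lemma cis2pi_add_nat (x : R) (n : nat) : cis2pi (x + INR n) = cis2pi x.
Proof.
  unfold cis2pi, cexpi.
  replace (2 * PI * (x + INR n)) with (2 * PI * x + 2 * INR n * PI) by ring.
  rewrite cos_period, sin_period. reflexivity.
Qed.

Lemma cis2pi_0 : cis2pi 0 = RtoC 1.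
Proof. unfold cis2pi, cexpi. rewrite Rmult_0_r, cos_0, sin_0. reflexivity. Qed.

Lemma cis2pi_eq1_integer (x : R) : cis2pi x = RtoC 1 -> exists j : Z, x = IZR j.
Proof.
  unfold cis2pi, cexpi. intros H. injection H as Hcos _.
  replace (2 * PI * x) with (2 * (PI * x)) in Hcos by ring.
  rewrite cos_2a_sin in Hcos.
  assert (Hsin : sin (PI * x) = 0) by nra.
  destruct (sin_eq_0_0 _ Hsin) as [j Hj]. exists j.
  pose proof PI_RGT_0. nra.
Qed.

Lemma cis2pi_ratio_neq1 (k q : nat) : (1 <= q)%nat -> (k mod q <> 0)%nat ->
  cis2pi (INR k / INR q) <> RtoC 1.
Proof.
  intros Hq1 Hm He. destruct (cis2pi_eq1_integer _ He) as [j Hj].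
  assert (Hq : INR q <> 0) by (apply not_0_INR; lia).
  assert (Hk : INR k = IZR j * INR q) by (rewrite <- Hj; field; exact Hq).
  rewrite !INR_IZR_INZ, <- mult_IZR in Hk. apply eq_IZR in Hk.
  apply Hm, Nat2Z.inj. rewrite Nat2Z.inj_mod, Hk. simpl. apply Z_mod_mult.
Qed.

Lemma Csum_cis2pi_progression (x : R) (q k : nat) : (1 <= q)%nat ->
  Csum (map (fun t => cis2pi (x + INR t * INR k / INR q)) (seq 0 q))
  = if Nat.eqb (k mod q) 0 then Cmult (RtoC (INR q)) (cis2pi x) else RtoC 0.
Proof.
  intros Hq. assert (Hq' : INR q <> 0) by (apply not_0_INR; lia).
  destruct (Nat.eqb_spec (k mod q) 0) as [Hm|Hm].
  - apply Nat.Lcm0.mod_divide in Hm. destruct Hm as [c ->].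
    rewrite <- (length_seq q 0) at 2. rewrite <- Csum_const.
    apply Csum_ext. intros t _.
    replace (x + INR t * INR (c * q) / INR q) with (x + INR (t * c))
      by (rewrite !mult_INR; field; exact Hq').
    apply cis2pi_add_nat.
  - set (w := cis2pi (INR k / INR q)).
    assert (Hw : Cminus (RtoC 1) w <> RtoC 0).
    { intros H0. apply (cis2pi_ratio_neq1 k q Hq Hm). fold w.
      replace w with (Cminus (RtoC 1) (Cminus (RtoC 1) w)) by ring. rewrite H0. ring. }
    set (f := fun t => cis2pi (x + INR t * (INR k / INR q))).
    assert (Hstep : forall t, Cmult (Cminus (RtoC 1) w) (f t) = Cminus (f t) (f (S t))).
    { intros t. unfold f. rewrite S_INR.
      replace (x + (INR t + 1) * (INR k / INR q)) with (x + INR t * (INR k / INR q) + INR k / INR q)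
        by ring.
      rewrite (cis2pi_add (x + INR t * (INR k / INR q))). fold w. ring. }
    assert (Hend : f q = f 0%nat).
    { unfold f. simpl INR. rewrite Rmult_0_l, Rplus_0_r.
      replace (x + INR q * (INR k / INR q)) with (x + INR k) by (field; exact Hq').
      apply cis2pi_add_nat. }
    assert (Hzero : Cmult (Cminus (RtoC 1) w) (Csum (map f (seq 0 q))) = RtoC 0).
    { rewrite <- Csum_scal, (Csum_ext _ _ _ (fun t _ => Hstep t)), Csum_telescope, Hend. ring. }
    rewrite (Csum_ext _ f) by (intros t _; unfold f, Rdiv; rewrite Rmult_assoc; reflexivity).
    replace (Csum (map f (seq 0 q)))
      with (Cmult (Cinv (Cminus (RtoC 1) w)) (Cmult (Cminus (RtoC 1) w) (Csum (map f (seq 0 q)))))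
      by (field; exact Hw).
    rewrite Hzero. ring.
Qed.

Open Scope nat_scope.

Definition nprime (p : nat) : Prop := prime (Z.of_nat p).

Lemma Nat_divide_Z (a b : nat) : Nat.divide a b <-> (Z.of_nat a | Z.of_nat b)%Z.
Proof.
  split.
  - intros [c ->]. exists (Z.of_nat c). lia.
  - intros [c Hc]. destruct (Nat.eq_dec a 0) as [->|Ha].
    + exists 0. lia.
    + assert (0 <= c)%Z by nia. exists (Z.to_nat c). nia.
Qed.

Lemma nprime_ge2 (p : nat) : nprime p -> 2 <= p.
Proof. intros [H _]. lia. Qed.

Lemma nprime_divide_mul (p a b : nat) :
  nprime p -> Nat.divide p (a * b) -> Nat.divide p a \/ Nat.divide p b.
Proof.
  intros Hp H. apply Nat_divide_Z in H. rewrite Nat2Z.inj_mul in H.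
  destruct (prime_mult _ Hp _ _ H); [left|right]; apply Nat_divide_Z; assumption.
Qed.

Lemma nprime_divide_nprime (p q : nat) : nprime p -> nprime q -> Nat.divide q p -> q = p.
Proof. intros Hp Hq H. apply Nat_divide_Z, prime_div_prime in H; auto. lia. Qed.

Lemma nprime_divide_pow (q p a : nat) : nprime q -> nprime p -> Nat.divide q (p ^ a) -> q = p.
Proof.
  intros Hq Hp. induction a as [|a IH]; simpl; intros H.
  - apply Nat.divide_1_r in H. apply nprime_ge2 in Hq. lia.
  - destruct (nprime_divide_mul _ _ _ Hq H); auto using nprime_divide_nprime.
Qed.

Lemma nprime_coprime (p a : nat) : nprime p -> ~ Nat.divide p a -> Nat.gcd p a = 1.
Proof.
  intros Hp Hn. pose proof (nprime_ge2 _ Hp) as Hp2.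
  pose proof (Nat.gcd_divide_l p a) as Hl. pose proof (Nat.gcd_divide_r p a) as Hr.
  apply Nat_divide_Z in Hl.
  destruct (prime_divisors _ Hp _ Hl) as [H|[H|[H|H]]]; try lia.
  exfalso. apply Hn. replace p with (Nat.gcd p a) by lia. exact Hr.
Qed.

Lemma coprime_divide_l (a b c : nat) : Nat.gcd a b = 1 -> Nat.divide c a -> Nat.gcd c b = 1.
Proof.
  intros H Hc. apply Nat.divide_1_r. rewrite <- H. apply Nat.gcd_greatest.
  - eapply Nat.divide_trans; [apply Nat.gcd_divide_l | exact Hc].
  - apply Nat.gcd_divide_r.
Qed.

Lemma coprime_divide_r (a b c : nat) : Nat.gcd a b = 1 -> Nat.divide c b -> Nat.gcd a c = 1.
Proof. rewrite !(Nat.gcd_comm a). apply coprime_divide_l. Qed.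

Lemma coprime_mul_l (a b c : nat) : Nat.gcd a c = 1 -> Nat.gcd b c = 1 -> Nat.gcd (a * b) c = 1.
Proof.
  intros Ha Hb. set (g := Nat.gcd (a * b) c).
  assert (Hga : Nat.gcd g a = 1).
  { rewrite Nat.gcd_comm. apply (coprime_divide_r a c g Ha), Nat.gcd_divide_r. }
  assert (Hgb : Nat.divide g b) by (apply (Nat.gauss g a b); auto; apply Nat.gcd_divide_l).
  apply Nat.divide_1_r. rewrite <- Hb. apply Nat.gcd_greatest; auto. apply Nat.gcd_divide_r.
Qed.

Lemma coprime_mul_r (a b c : nat) : Nat.gcd c a = 1 -> Nat.gcd c b = 1 -> Nat.gcd c (a * b) = 1.
Proof. rewrite !(Nat.gcd_comm c). apply coprime_mul_l. Qed.

Lemma coprime_pow_l (a e c : nat) : Nat.gcd a c = 1 -> Nat.gcd (a ^ e) c = 1.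
Proof. intros H. induction e as [|e IH]; simpl; auto using coprime_mul_l. Qed.

Lemma gcd_mul_coprime_r (x y a : nat) :
  Nat.divide x a -> Nat.gcd y a = 1 -> Nat.gcd (x * y) a = x.
Proof.
  intros [a' ->] H. rewrite (Nat.mul_comm a' x), Nat.gcd_mul_mono_l.
  rewrite (coprime_divide_r y (a' * x) a' H) by (exists x; lia). lia.
Qed.

Lemma divide_mul_gcd_split (a b k : nat) : Nat.gcd a b = 1 -> Nat.divide k (a * b) ->
  k = Nat.gcd k a * Nat.gcd k b.
Proof.
  intros Hab Hk. destruct (Nat.eq_dec k 0) as [->|Hk0]; [destruct Hk as [c Hc]; simpl; lia|].
  set (g1 := Nat.gcd k a).
  assert (Hg1 : g1 <> 0) by (unfold g1; intros H; apply Nat.gcd_eq_0 in H; lia).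
  destruct (Nat.gcd_divide_l k a) as [k1 Hk1]. destruct (Nat.gcd_divide_r k a) as [a1 Ha1].
  fold g1 in Hk1, Ha1.
  assert (Hc : Nat.gcd k1 a1 = 1).
  { assert (g1 = Nat.gcd k1 a1 * g1)
      by (unfold g1 at 1; rewrite Hk1, Ha1 at 1; apply Nat.gcd_mul_mono_r).
    nia. }
  assert (Hk1b : Nat.divide k1 b).
  { apply (Nat.gauss k1 a1 b); [|exact Hc]. apply (Nat.mul_divide_cancel_r _ _ g1 Hg1).
    rewrite <- Hk1. replace (a1 * b * g1) with (a * b) by (rewrite Ha1; ring). exact Hk. }
  assert (Hg2 : Nat.gcd k b = k1).
  { apply Nat.divide_antisym.
    - apply (Nat.gauss _ g1).
      + rewrite Nat.mul_comm, <- Hk1. apply Nat.gcd_divide_l.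
      + apply (coprime_divide_l b g1); [|apply Nat.gcd_divide_r].
        apply (coprime_divide_r b a g1); [rewrite Nat.gcd_comm; exact Hab | apply Nat.gcd_divide_r].
    - apply Nat.gcd_greatest; [exists g1; lia | exact Hk1b]. }
  fold g1. rewrite Hg2. lia.
Qed.

Lemma divide_nprime_pow (p a x : nat) :
  nprime p -> Nat.divide x (p ^ a) -> exists i, i <= a /\ x = p ^ i.
Proof.
  intros Hp. pose proof (nprime_ge2 _ Hp) as Hp2. revert x.
  induction a as [|a IH]; intros x H.
  - apply Nat.divide_1_r in H. exists 0. simpl. lia.
  - destruct (Nat.eq_dec (x mod p) 0) as [Hm|Hm].
    + apply Nat.Lcm0.mod_divide in Hm. destruct Hm as [x' ->].
      assert (Hx' : Nat.divide x' (p ^ a)).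
      { apply (Nat.mul_divide_cancel_r _ _ p); [lia|].
        rewrite (Nat.mul_comm (p ^ a)). exact H. }
      destruct (IH _ Hx') as [i [Hi ->]]. exists (S i). split; [lia | simpl; ring].
    + assert (Hx : Nat.divide x (p ^ a)).
      { apply (Nat.gauss x p); [exact H|]. rewrite Nat.gcd_comm. apply nprime_coprime; auto.
        intros Hd. apply Hm. apply Nat.Lcm0.mod_divide. exact Hd. }
      destruct (IH _ Hx) as [i [Hi ->]]. exists i. split; [lia | reflexivity].
Qed.

Lemma eqb_mod_mul_coprime (q x y : nat) : nprime q -> ~ Nat.divide q x ->
  Nat.eqb ((x * y) mod q) 0 = Nat.eqb (y mod q) 0.
Proof.
  intros Hq Hx. apply Bool.eq_iff_eq_true. rewrite !Nat.eqb_eq, !Nat.Lcm0.mod_divide.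
  split.
  - intros H. destruct (nprime_divide_mul _ _ _ Hq H); tauto.
  - apply Nat.divide_mul_r.
Qed.

Lemma eqb_mod_div_nprime (q r k : nat) : nprime q -> nprime r -> q <> r -> Nat.divide q k ->
  Nat.eqb ((k / q) mod r) 0 = Nat.eqb (k mod r) 0.
Proof.
  intros Hq Hr Hne [c ->]. pose proof (nprime_ge2 _ Hq).
  rewrite Nat.div_mul, Nat.mul_comm, eqb_mod_mul_coprime; auto; [|lia].
  intros Hd. apply Hne. symmetry. apply nprime_divide_nprime; assumption.
Qed.

Lemma nprod_nprime_pow_pos (p e : nat -> nat) (L : list nat) :
  (forall l, In l L -> nprime (p l)) -> 1 <= nprod (map (fun l => p l ^ e l) L).
Proof.
  induction L as [|a L IH]; intros H; simpl; [lia|].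
  assert (p a ^ e a <> 0)
    by (apply Nat.pow_nonzero; pose proof (nprime_ge2 _ (H a (or_introl eq_refl))); lia).
  assert (1 <= nprod (map (fun l => p l ^ e l) L)) by (apply IH; intros; apply H; right; assumption).
  nia.
Qed.

Lemma nprime_not_divide_nprod (p e : nat -> nat) (q : nat) (L : list nat) : nprime q ->
  (forall l, In l L -> nprime (p l) /\ p l <> q) ->
  ~ Nat.divide q (nprod (map (fun l => p l ^ e l) L)).
Proof.
  intros Hq. induction L as [|a L IH]; intros HL H; simpl in H.
  - apply Nat.divide_1_r in H. apply nprime_ge2 in Hq. lia.
  - destruct (HL a (or_introl eq_refl)) as [Ha Hne].
    destruct (nprime_divide_mul _ _ _ Hq H) as [H1|H1].
    + apply Hne. symmetry. exact (nprime_divide_pow q (p a) (e a) Hq Ha H1).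
    + apply IH; [intros l Hl; apply HL; right; exact Hl | exact H1].
Qed.

Lemma in_divisors_list (n k : nat) : n <> 0 -> In k (divisors_list n) <-> Nat.divide k n.
Proof.
  intros Hn. unfold divisors_list. rewrite filter_In, in_seq, Nat.eqb_eq, Nat.Lcm0.mod_divide.
  split; [tauto|]. intros Hk. split; [|exact Hk].
  destruct (Nat.eq_dec k 0) as [->|Hk0].
  - destruct Hk as [c Hc]. lia.
  - apply Nat.divide_pos_le in Hk; lia.
Qed.

Lemma divisors_list_NoDup (n : nat) : NoDup (divisors_list n).
Proof. apply NoDup_filter, seq_NoDup. Qed.

Lemma divisors_list_nprime_pow (p a : nat) : nprime p ->
  Permutation (divisors_list (p ^ a)) (map (fun i => p ^ i) (seq 0 (S a))).
Proof.
  intros Hp. pose proof (nprime_ge2 _ Hp).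
  assert (Hpa : p ^ a <> 0) by (apply Nat.pow_nonzero; lia).
  apply NoDup_Permutation.
  - apply divisors_list_NoDup.
  - apply NoDup_map_NoDup_ForallPairs; [|apply seq_NoDup].
    intros i j _ _ Hij. apply Nat.pow_inj_r in Hij; lia.
  - intros x. rewrite in_divisors_list by exact Hpa. rewrite in_map_iff. split.
    + intros Hd. destruct (divide_nprime_pow _ _ _ Hp Hd) as [i [Hi ->]].
      exists i. split; [reflexivity | apply in_seq; lia].
    + intros [i [<- Hi]]. apply in_seq in Hi.
      exists (p ^ (a - i)). rewrite <- Nat.pow_add_r. f_equal. lia.
Qed.

Lemma NoDup_flat_map_map {A B D} (f : A -> B -> D) (lA : list A) (lB : list B) :
  NoDup lA -> NoDup lB ->
  (forall x x' y y', In x lA -> In x' lA -> In y lB -> In y' lB ->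
     f x y = f x' y' -> x = x' /\ y = y') ->
  NoDup (flat_map (fun x => map (f x) lB) lA).
Proof.
  induction lA as [|a lA IH]; intros HA HB Hinj; simpl; [constructor|].
  inversion HA as [|a' lA' Ha HA']; subst.
  apply NoDup_app.
  - apply NoDup_map_NoDup_ForallPairs; [|exact HB].
    intros y y' Hy Hy' E. apply (Hinj a a y y'); auto; left; reflexivity.
  - apply IH; [exact HA' | exact HB |].
    intros x x' y y' Hx Hx' Hy Hy'. apply Hinj; auto; right; assumption.
  - intros k Hk1 Hk2. apply in_map_iff in Hk1 as [y [<- Hy]].
    apply in_flat_map in Hk2 as [x' [Hx' Hk2]]. apply in_map_iff in Hk2 as [y' [E Hy']].
    destruct (Hinj a x' y y') as [<- _]; auto; [left; reflexivity | right; exact Hx'].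
Qed.

Lemma divisors_list_mul (A B : nat) : A <> 0 -> B <> 0 -> Nat.gcd A B = 1 ->
  Permutation (divisors_list (A * B))
    (flat_map (fun x => map (fun y => x * y) (divisors_list B)) (divisors_list A)).
Proof.
  intros HA HB Hab. assert (HAB : A * B <> 0) by lia.
  apply NoDup_Permutation.
  - apply divisors_list_NoDup.
  - apply NoDup_flat_map_map; try apply divisors_list_NoDup.
    intros x x' y y' Hx Hx' Hy Hy' E.
    rewrite in_divisors_list in Hx, Hx', Hy, Hy' by assumption.
    assert (Hcop : forall w, Nat.divide w B -> Nat.gcd w A = 1).
    { intros w Hw. rewrite Nat.gcd_comm. exact (coprime_divide_r A B w Hab Hw). }
    assert (Ex : x = x').
    { rewrite <- (gcd_mul_coprime_r x y A), <- (gcd_mul_coprime_r x' y' A), E; auto. }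
    subst x'. split; [reflexivity|].
    apply (Nat.mul_cancel_l _ _ x); [|exact E].
    intros ->. destruct Hx as [c Hc]. lia.
  - intros k. rewrite in_divisors_list, in_flat_map by exact HAB. split.
    + intros Hk. exists (Nat.gcd k A). split.
      * apply in_divisors_list; [exact HA | apply Nat.gcd_divide_r].
      * apply in_map_iff. exists (Nat.gcd k B). split.
        -- symmetry. apply divide_mul_gcd_split; assumption.
        -- apply in_divisors_list; [exact HB | apply Nat.gcd_divide_r].
    + intros [x [Hx Hk]]. apply in_map_iff in Hk as [y [<- Hy]].
      rewrite in_divisors_list in Hx, Hy by assumption.
      destruct Hx as [a ->], Hy as [b ->]. exists (a * b). ring.
Qed.

Definition distinct_primes (p : nat -> nat) (L : list nat) : Prop :=
  NoDup (map p L) /\ (forall l, In l L -> nprime (p l)).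

Lemma distinct_primes_cons (p : nat -> nat) (a : nat) (L : list nat) :
  distinct_primes p (a :: L) <->
  distinct_primes p L /\ nprime (p a) /\ forall l, In l L -> p l <> p a.
Proof.
  unfold distinct_primes. simpl. rewrite NoDup_cons_iff. split.
  - intros [[Hn Hnd] Hf]. split; [split|split].
    + exact Hnd.
    + intros l Hl. apply Hf. right. exact Hl.
    + apply Hf. left. reflexivity.
    + intros l Hl E. apply Hn. rewrite <- E. apply in_map, Hl.
  - intros [[Hnd Hf] [Ha Hne]]. split; [split|].
    + intros Hin. apply in_map_iff in Hin as [l [E Hl]]. exact (Hne l Hl E).
    + exact Hnd.
    + intros l [<-|Hl]; auto.
Qed.

Lemma nprime_coprime_nprod (p e : nat -> nat) (a : nat) (L : list nat) :
  distinct_primes p (a :: L) -> Nat.gcd (p a ^ e a) (nprod (map (fun l => p l ^ e l) L)) = 1.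
Proof.
  intros HL. apply distinct_primes_cons in HL as [[_ Hf] [Ha Hne]].
  apply coprime_pow_l, nprime_coprime, nprime_not_divide_nprod; auto.
Qed.

Lemma Csum_divisors_mul (F : nat -> C) (A B : nat) :
  A <> 0 -> B <> 0 -> Nat.gcd A B = 1 ->
  Csum (map F (divisors_list (A * B)))
  = Csum (map (fun x => Csum (map (fun y => F (x * y)) (divisors_list B))) (divisors_list A)).
Proof.
  intros HA HB Hab. rewrite (Csum_perm _ _ _ (divisors_list_mul A B HA HB Hab)), Csum_flat_map.
  apply Csum_ext. intros x _. rewrite map_map. reflexivity.
Qed.

(* Among the divisors [p^0, ..., p^a] of [p^a], exactly [a] are divisible by [p]. *)
Lemma Csum_divisors_nprime_pow (h : bool -> C) (p a : nat) : nprime p ->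
  Csum (map (fun x => h (Nat.eqb (x mod p) 0)) (divisors_list (p ^ a)))
  = Cplus (h false) (Cmult (RtoC (INR a)) (h true)).
Proof.
  intros Hp. pose proof (nprime_ge2 _ Hp).
  rewrite (Csum_perm _ _ _ (divisors_list_nprime_pow p a Hp)), map_map. simpl.
  rewrite Nat.mod_small by lia.
  rewrite (Csum_ext _ (fun _ => h true)), Csum_const, length_seq; [reflexivity|].
  intros i Hi. apply in_seq in Hi. replace i with (S (i - 1)) by lia.
  simpl. rewrite Nat.mul_comm, Nat.Div0.mod_mul. reflexivity.
Qed.

Lemma Csum_divisors_nprod (p alpha : nat -> nat) (g : nat -> bool -> C) (L : list nat) :
  distinct_primes p L ->
  Csum (map (fun k => Cprod (map (fun l => g l (Nat.eqb (k mod p l) 0)) L))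
            (divisors_list (nprod (map (fun l => p l ^ alpha l) L))))
  = Cprod (map (fun l => Cplus (g l false) (Cmult (RtoC (INR (alpha l))) (g l true))) L).
Proof.
  induction L as [|a L IH]; intros HL; [simpl; ring|].
  pose proof (nprime_coprime_nprod p alpha a L HL) as Hcop.
  apply distinct_primes_cons in HL as [HL [Ha Hne]].
  pose proof (nprime_ge2 _ Ha).
  set (B := nprod (map (fun l => p l ^ alpha l) L)) in *.
  assert (HB : B <> 0).
  { enough (1 <= B) by lia. apply nprod_nprime_pow_pos, HL. }
  assert (HaB : ~ Nat.divide (p a) B)
    by (apply nprime_not_divide_nprod; auto; intros l Hl; split; [apply HL | apply Hne]; exact Hl).
  simpl (nprod _). fold B.
  rewrite Csum_divisors_mul by (auto; apply Nat.pow_nonzero; lia).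
  set (P := fun y => Cprod (map (fun l => g l (Nat.eqb (y mod p l) 0)) L)).
  rewrite (Csum_ext _ (fun x => Cmult (g a (Nat.eqb (x mod p a) 0)) (Csum (map P (divisors_list B))))).
  - rewrite Csum_scal_r. unfold P. rewrite IH, Csum_divisors_nprime_pow by assumption. reflexivity.
  - intros x Hx. rewrite <- Csum_scal. apply Csum_ext. intros y Hy.
    rewrite in_divisors_list in Hx by (apply Nat.pow_nonzero; lia).
    rewrite in_divisors_list in Hy by exact HB.
    simpl. unfold P. f_equal.
    + rewrite Nat.mul_comm, eqb_mod_mul_coprime; [reflexivity | exact Ha |].
      intros Hd. apply HaB. apply (Nat.divide_trans _ y); assumption.
    + apply Cprod_ext. intros l Hl. rewrite eqb_mod_mul_coprime; [reflexivity | apply HL, Hl|].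
      intros Hd. apply (Hne l Hl). apply (nprime_divide_pow _ _ (alpha a)); [apply HL, Hl | exact Ha |].
      apply (Nat.divide_trans _ x); assumption.
Qed.

Open Scope R_scope.

Definition ramanujan_sum_nat (m k : nat) : C :=
  Csum (map (fun j => cis2pi (INR j * INR k / INR m))
            (filter (fun j => Nat.eqb (Nat.gcd j m) 1) (seq 1 m))).

Lemma ramanujan_sum_of_nat (m k : nat) : ramanujan_sum m (Z.of_nat k) = ramanujan_sum_nat m k.
Proof.
  apply Csum_ext. intros j _. unfold cis2pi.
  rewrite <- Nat2Z.inj_mul, <- INR_IZR_INZ, mult_INR. f_equal. unfold Rdiv. ring.
Qed.

Lemma ramanujan_sum_nat_1 (k : nat) : ramanujan_sum_nat 1 k = RtoC 1.
Proof.
  unfold ramanujan_sum_nat. simpl.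
  replace (1 * INR k / 1) with (0 + INR k) by field.
  rewrite cis2pi_add_nat, cis2pi_0. ring.
Qed.

Lemma seq_add_shift (a c n : nat) : seq (a + c) n = map (fun i => (i + c)%nat) (seq a n).
Proof.
  revert a. induction n as [|n IH]; intros a; simpl; [reflexivity|].
  f_equal. rewrite <- IH. reflexivity.
Qed.

Lemma Csum_seq_blocks (q m : nat) (F : nat -> C) :
  Csum (map F (seq 1 (q * m))) =
  Csum (map (fun t => Csum (map (fun i => F (i + t * m)%nat) (seq 1 m))) (seq 0 q)).
Proof.
  induction q as [|q IH]; [reflexivity|].
  replace (S q * m)%nat with (q * m + m)%nat by lia.
  rewrite seq_app, map_app, Csum_app, IH, seq_S, map_app, Csum_app.
  rewrite (seq_add_shift 1 (q * m) m), map_map. simpl. ring.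
Qed.

Lemma Csum_seq_multiples (q m : nat) (F : nat -> C) : (1 <= q)%nat ->
  Csum (map (fun j => if Nat.eqb (j mod q) 0 then F j else RtoC 0) (seq 1 (q * m))) =
  Csum (map (fun i => F (q * i)%nat) (seq 1 m)).
Proof.
  intros Hq. induction m as [|m IH]; [rewrite Nat.mul_0_r; reflexivity|].
  replace (q * S m)%nat with (q * m + (q - 1) + 1)%nat by lia.
  rewrite !seq_app, !map_app, !Csum_app, IH, (seq_S m 1), map_app, Csum_app.
  rewrite (Csum_ext _ (fun _ => RtoC 0) (seq (1 + q * m) (q - 1))), Csum_zero.
  - simpl. replace (S (q * m + (q - 1))) with (q * S m)%nat by lia.
    rewrite Nat.mul_comm, Nat.Div0.mod_mul, Nat.mul_comm. simpl. ring.
  - intros j Hj. apply in_seq in Hj.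
    replace (j mod q)%nat with (j - q * m)%nat by (apply (Nat.mod_unique _ _ m); lia).
    destruct (Nat.eqb_spec (j - q * m) 0); [lia | reflexivity].
Qed.

Lemma eqb_gcd_mul_nprime (q m j : nat) : nprime q ->
  Nat.eqb (Nat.gcd j (q * m)) 1
  = andb (Nat.eqb (Nat.gcd j m) 1) (negb (Nat.eqb (j mod q) 0)).
Proof.
  intros Hq. pose proof (nprime_ge2 _ Hq).
  apply Bool.eq_iff_eq_true. rewrite Bool.andb_true_iff, Bool.negb_true_iff, !Nat.eqb_eq, Nat.eqb_neq.
  rewrite Nat.Lcm0.mod_divide. split.
  - intros Hc. split.
    + apply (coprime_divide_r j (q * m) m Hc). apply Nat.divide_factor_r.
    + intros Hd. assert (Nat.divide q 1) as H1.
      { rewrite <- Hc. apply Nat.gcd_greatest; [exact Hd | apply Nat.divide_factor_l]. }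
      apply Nat.divide_1_r in H1. lia.
  - intros [Hc Hd]. apply coprime_mul_r; [|exact Hc].
    rewrite Nat.gcd_comm. apply nprime_coprime; assumption.
Qed.

Lemma ramanujan_lifted_sum (q m k : nat) : (1 <= q)%nat -> (1 <= m)%nat ->
  Csum (map (fun j => if Nat.eqb (Nat.gcd j m) 1
                      then cis2pi (INR j * INR k / INR (q * m)) else RtoC 0) (seq 1 (q * m)))
  = if Nat.eqb (k mod q) 0 then Cmult (RtoC (INR q)) (ramanujan_sum_nat m (k / q)) else RtoC 0.
Proof.
  intros Hq Hm.
  assert (HqR : INR q <> 0) by (apply not_0_INR; lia).
  assert (HmR : INR m <> 0) by (apply not_0_INR; lia).
  rewrite Csum_seq_blocks.
  (* [gcd (i + t m) m = gcd i m] and [e((i + t m) k / (q m)) = e(i k / (q m) + t k / q)] *)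
  rewrite (Csum_ext _ (fun t => Csum (map (fun i => if Nat.eqb (Nat.gcd i m) 1
        then cis2pi (INR i * INR k / INR (q * m) + INR t * INR k / INR q) else RtoC 0) (seq 1 m)))).
  2:{ intros t _. apply Csum_ext. intros i _.
      rewrite Nat.gcd_comm, Nat.gcd_add_mult_diag_r, Nat.gcd_comm.
      destruct (Nat.gcd i m =? 1)%nat; [|reflexivity].
      f_equal. rewrite plus_INR, !mult_INR. field. split; assumption. }
  rewrite Csum_swap.
  rewrite (Csum_ext _ (fun i => if Nat.eqb (Nat.gcd i m) 1 then
      (if Nat.eqb (k mod q) 0 then Cmult (RtoC (INR q)) (cis2pi (INR i * INR k / INR (q * m)))
       else RtoC 0) else RtoC 0)).
  2:{ intros i _. destruct (Nat.gcd i m =? 1)%nat.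
      - apply Csum_cis2pi_progression. exact Hq.
      - apply Csum_zero. }
  destruct (Nat.eqb_spec (k mod q) 0) as [Hk|Hk].
  - unfold ramanujan_sum_nat. rewrite Csum_filter, <- Csum_scal. apply Csum_ext. intros i _.
    apply Nat.Lcm0.mod_divide in Hk. destruct Hk as [c ->]. rewrite Nat.div_mul by lia.
    destruct (Nat.gcd i m =? 1)%nat; [|ring].
    do 2 f_equal. rewrite !mult_INR. field. split; assumption.
  - rewrite (Csum_ext _ (fun _ => RtoC 0)); [apply Csum_zero|].
    intros i _. destruct (Nat.gcd i m =? 1)%nat; reflexivity.
Qed.

Lemma ramanujan_lifted_sum_multiples (q m k : nat) : (1 <= q)%nat -> (1 <= m)%nat ->
  Nat.gcd q m = 1%nat ->
  Csum (map (fun j => if Nat.eqb (j mod q) 0 then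
                        if Nat.eqb (Nat.gcd j m) 1
                        then cis2pi (INR j * INR k / INR (q * m)) else RtoC 0
                      else RtoC 0) (seq 1 (q * m)))
  = ramanujan_sum_nat m k.
Proof.
  intros Hq Hm Hqm.
  rewrite Csum_seq_multiples by exact Hq.
  unfold ramanujan_sum_nat. rewrite Csum_filter. apply Csum_ext. intros i _.
  assert (Hgcd : Nat.eqb (Nat.gcd (q * i) m) 1 = Nat.eqb (Nat.gcd i m) 1).
  { apply Bool.eq_iff_eq_true. rewrite !Nat.eqb_eq. split.
    - intros H. apply (coprime_divide_l (q * i) m i H), Nat.divide_factor_r.
    - intros H. apply coprime_mul_l; assumption. }
  rewrite Hgcd. destruct (Nat.gcd i m =? 1)%nat; [|reflexivity].
  f_equal. rewrite !mult_INR. field. split; apply not_0_INR; lia.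
Qed.

Lemma ramanujan_sum_nat_nprime_mul (q m k : nat) :
  nprime q -> (1 <= m)%nat -> Nat.gcd q m = 1%nat ->
  ramanujan_sum_nat (q * m) k
  = Cminus (if Nat.eqb (k mod q) 0 then Cmult (RtoC (INR q)) (ramanujan_sum_nat m (k / q))
            else RtoC 0)
           (ramanujan_sum_nat m k).
Proof.
  intros Hq Hm Hqm. pose proof (nprime_ge2 _ Hq).
  unfold ramanujan_sum_nat at 1. rewrite Csum_filter.
  set (G := fun j => if Nat.eqb (Nat.gcd j m) 1
                     then cis2pi (INR j * INR k / INR (q * m)) else RtoC 0).
  rewrite (Csum_ext _ (fun j => Cminus (G j) (if Nat.eqb (j mod q) 0 then G j else RtoC 0))).
  - unfold G. rewrite Csum_minus, ramanujan_lifted_sum, ramanujan_lifted_sum_multiples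
      by (assumption || lia).
    reflexivity.
  - intros j _. rewrite eqb_gcd_mul_nprime by exact Hq. unfold G.
    destruct (Nat.gcd j m =? 1)%nat, (j mod q =? 0)%nat; simpl; ring.
Qed.

Definition Rprod (l : list R) : R := fold_right Rmult 1 l.

Definition ramanujan_prime_value (q k : nat) : R :=
  if Nat.eqb (k mod q)%nat 0 then INR q - 1 else -1.

Lemma ramanujan_sum_nat_squarefree (p beta : nat -> nat) (L : list nat) (k : nat) :
  distinct_primes p L -> (forall l, In l L -> (beta l <= 1)%nat) ->
  ramanujan_sum_nat (nprod (map (fun l => (p l ^ beta l)%nat) L)) k =
  RtoC (Rprod (map (fun l => if Nat.eqb (beta l) 1 then ramanujan_prime_value (p l) k else 1) L)).
Proof.
  revert k. induction L as [|a L IH]; intros k HL Hbeta; [apply ramanujan_sum_nat_1|].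
  pose proof (nprime_coprime_nprod p beta a L HL) as Hcop.
  apply distinct_primes_cons in HL as [HL [Ha Hne]].
  assert (IH' : forall k', ramanujan_sum_nat (nprod (map (fun l => (p l ^ beta l)%nat) L)) k' =
     RtoC (Rprod (map (fun l => if Nat.eqb (beta l) 1 then ramanujan_prime_value (p l) k' else 1) L)))
    by (intros k'; apply IH; [exact HL | intros l Hl; apply Hbeta; right; exact Hl]).
  set (m := nprod (map (fun l => (p l ^ beta l)%nat) L)) in *.
  set (P := Rprod (map (fun l => if Nat.eqb (beta l) 1 then ramanujan_prime_value (p l) k else 1) L)).
  simpl (nprod _). fold m. simpl (Rprod _). fold P.
  destruct (beta a) as [|[|b]] eqn:Hb; [| |specialize (Hbeta a (or_introl eq_refl)); lia].
  - rewrite Nat.pow_0_r, Nat.mul_1_l, IH'. simpl. rewrite Rmult_1_l. reflexivity.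
  - rewrite Nat.pow_1_r in *. rewrite ramanujan_sum_nat_nprime_mul, !IH'; [|exact Ha | |exact Hcop].
    2:{ apply nprod_nprime_pow_pos, HL. }
    fold P. simpl Nat.eqb.
    destruct (Nat.eqb_spec (k mod p a) 0) as [Hk|Hk].
    + (* the factors at the other primes do not see the division by [p a] *)
      replace (Rprod _) with P.
      * unfold ramanujan_prime_value. rewrite Hk. simpl.
        rewrite <- RtoC_mult, <- RtoC_minus. f_equal. ring.
      * unfold P. f_equal. apply map_ext_in. intros l Hl.
        destruct (Nat.eqb (beta l) 1); [|reflexivity]. unfold ramanujan_prime_value.
        rewrite eqb_mod_div_nprime; [reflexivity | exact Ha | apply HL, Hl | | ].
        -- intros E. apply (Hne l Hl). symmetry. exact E.
        -- apply Nat.Lcm0.mod_divide. exact Hk.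
    + unfold ramanujan_prime_value. rewrite (proj2 (Nat.eqb_neq _ _) Hk).
      rewrite <- RtoC_minus. f_equal. ring.
Qed.

Lemma cpow_mult (a b : R) (z : C) : 0 < a -> 0 < b -> cpow (a * b) z = Cmult (cpow a z) (cpow b z).
Proof.
  intros Ha Hb. unfold cpow, Cmult. simpl. rewrite ln_mult by assumption.
  rewrite !Rmult_plus_distr_l, exp_plus, cos_plus, sin_plus. f_equal; ring.
Qed.

Lemma cpow_1 (z : C) : cpow 1 z = RtoC 1.
Proof. unfold cpow. rewrite ln_1, !Rmult_0_r, exp_0, cos_0, sin_0. unfold RtoC. f_equal; ring. Qed.

Lemma cpow_0 (a : R) : cpow a (RtoC 0) = RtoC 1.
Proof. unfold cpow. simpl. rewrite !Rmult_0_l, exp_0, cos_0, sin_0. unfold RtoC. f_equal; ring. Qed.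

Lemma cpow_neq0 (a : R) (z : C) : cpow a z <> RtoC 0.
Proof.
  unfold cpow. intros H. injection H as Hre Him.
  pose proof (exp_pos (Re z * ln a)). pose proof (sin2_cos2 (Im z * ln a)) as H1. unfold Rsqr in H1.
  apply Rmult_integral in Hre as [Hre|Hre]; [lra|].
  apply Rmult_integral in Him as [Him|Him]; [lra|].
  rewrite Hre, Him in H1. lra.
Qed.

Lemma Rprod_pos (f : nat -> R) (L : list nat) : (forall l, In l L -> 0 < f l) -> 0 < Rprod (map f L).
Proof.
  induction L as [|a L IH]; intros H; simpl; [lra|].
  apply Rmult_lt_0_compat; [apply H; left; reflexivity | apply IH; intros; apply H; right; assumption].
Qed.

Lemma Rabs_Rprod (f : nat -> R) (L : list nat) :
  Rabs (Rprod (map f L)) = Rprod (map (fun l => Rabs (f l)) L).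
Proof. induction L as [|a L IH]; simpl; [apply Rabs_R1 | rewrite Rabs_mult, IH; reflexivity]. Qed.

Lemma Cinv_cpow_Rprod (f : nat -> R) (L : list nat) (z : C) : (forall l, In l L -> 0 < f l) ->
  Cinv (cpow (Rprod (map f L)) z) = Cprod (map (fun l => Cinv (cpow (f l) z)) L).
Proof.
  induction L as [|a L IH]; intros H; simpl.
  - rewrite cpow_1. unfold Cinv, RtoC. simpl. f_equal; field.
  - rewrite cpow_mult, <- IH; [| intros; apply H; right; assumption | apply H; left; reflexivity
                             | apply Rprod_pos; intros; apply H; right; assumption].
    field. split; apply cpow_neq0.
Qed.

Definition ramanujan_local_factor (q beta : nat) (z : C) (divides : bool) : C :=
  if andb divides (Nat.eqb beta 1) then Cinv (cpow (INR q - 1) z) else RtoC 1.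

Lemma Cinv_cpow_abs_ramanujan_prime_value (q beta k : nat) (z : C) :
  nprime q -> (beta <= 1)%nat ->
  Cinv (cpow (Rabs (if Nat.eqb beta 1 then ramanujan_prime_value q k else 1)) z)
  = ramanujan_local_factor q beta z (Nat.eqb (k mod q) 0).
Proof.
  intros Hq Hb. pose proof (le_INR _ _ (nprime_ge2 _ Hq)) as Hq2. simpl in Hq2.
  assert (Hinv1 : Cinv (cpow 1 z) = RtoC 1)
    by (rewrite cpow_1; unfold Cinv, RtoC; simpl; f_equal; field).
  unfold ramanujan_local_factor, ramanujan_prime_value.
  destruct (Nat.eqb beta 1); [|rewrite Bool.andb_false_r, Rabs_R1; exact Hinv1].
  destruct (Nat.eqb (k mod q) 0); simpl.
  - rewrite Rabs_right by lra. reflexivity.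
  - replace (Rabs (-1)) with 1 by (rewrite Rabs_left; lra). exact Hinv1.
Qed.

Lemma Cinv_cpow_abs_ramanujan_squarefree (p beta : nat -> nat) (L : list nat) (k : nat) (z : C) :
  distinct_primes p L -> (forall l, In l L -> (beta l <= 1)%nat) ->
  Cinv (cpow (Cmod (ramanujan_sum (nprod (map (fun l => (p l ^ beta l)%nat) L)) (Z.of_nat k))) z)
  = Cprod (map (fun l => ramanujan_local_factor (p l) (beta l) z (Nat.eqb (k mod p l) 0)) L).
Proof.
  intros HL Hbeta.
  rewrite ramanujan_sum_of_nat, ramanujan_sum_nat_squarefree, Cmod_R, Rabs_Rprod by assumption.
  rewrite Cinv_cpow_Rprod.
  - apply Cprod_ext. intros l Hl.
    apply Cinv_cpow_abs_ramanujan_prime_value; [apply HL | apply Hbeta]; exact Hl.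
  - intros l Hl. pose proof (le_INR _ _ (nprime_ge2 _ (proj2 HL l Hl))) as Hp2. simpl in Hp2.
    unfold ramanujan_prime_value.
    destruct (Nat.eqb (beta l) 1); [destruct (Nat.eqb (k mod p l) 0)|];
      [rewrite Rabs_right | rewrite Rabs_left | rewrite Rabs_R1]; lra.
Qed.

Lemma ramanujan_local_factor_sum (q alpha beta : nat) (z : C) : (1 <= q)%nat -> (beta <= 1)%nat ->
  Cplus (ramanujan_local_factor q beta z false)
        (Cmult (RtoC (INR alpha)) (ramanujan_local_factor q beta z true))
  = Cplus (RtoC 1) (Cdiv (RtoC (INR alpha)) (cpow (INR (q - 1)) (Cmult (RtoC (INR beta)) z))).
Proof.
  intros Hq Hb. unfold ramanujan_local_factor, Cdiv. simpl andb.
  destruct beta as [|[|b]]; [| |lia]; simpl Nat.eqb; cbv iota.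
  - rewrite Cmult_0_l, cpow_0. field.
  - rewrite minus_INR, Cmult_1_l by exact Hq. simpl INR. ring.
Qed.

Theorem mainTheorem10
  (n d r : nat) (p alpha beta : nat -> nat)
  (Hprime : forall l, (l < r)%nat -> prime (Z.of_nat (p l)))
  (Hdistinct : forall l l', (l < r)%nat -> (l' < r)%nat -> p l = p l' -> l = l')
  (Halpha : forall l, (l < r)%nat -> (1 <= alpha l)%nat)
  (Hbeta : forall l, (l < r)%nat -> (beta l <= 1)%nat)
  (Hn : n = nprod (map (fun l => p l ^ alpha l) (seq 0 r))%nat)
  (Hd : d = nprod (map (fun l => p l ^ beta l) (seq 0 r))%nat)
  (z : C) :
  Csum (map (fun k => Cinv (cpow (Cmod (ramanujan_sum d (Z.of_nat k))) z))
            (divisors_list n))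
  = Cprod (map (fun l =>
        Cplus (RtoC 1)
          (Cdiv (RtoC (INR (alpha l)))
                (cpow (INR (p l - 1)) (Cmult (RtoC (INR (beta l))) z))))
        (seq 0 r)).
Proof.
  assert (HL : distinct_primes p (seq 0 r)).
  { split.
    - apply NoDup_map_NoDup_ForallPairs; [|apply seq_NoDup].
      intros l l' Hl Hl'. apply in_seq in Hl, Hl'. apply Hdistinct; lia.
    - intros l Hl. apply in_seq in Hl. apply Hprime. lia. }
  assert (Hbeta' : forall l, In l (seq 0 r) -> (beta l <= 1)%nat)
    by (intros l Hl; apply in_seq in Hl; apply Hbeta; lia).
  subst n d.
  rewrite (Csum_ext _ _ _ (fun k _ => Cinv_cpow_abs_ramanujan_squarefree p beta _ k z HL Hbeta')).
  rewrite (Csum_divisors_nprod p alpha (fun l => ramanujan_local_factor (p l) (beta l) z))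
    by exact HL.
  apply Cprod_ext. intros l Hl. apply ramanujan_local_factor_sum; [|exact (Hbeta' l Hl)].
  pose proof (nprime_ge2 _ (proj2 HL l Hl)). lia.
Qed.
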